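(* Let $n \geq 1$, $m \geq 0$ and $1 \leq j \leq n$ be integers. Then $L(m,j) = \binom{m+j-1}{m}$.
   Context: Six-vertex model: on an $r \times c$ grid ($r$ rows, $c$ columns) there are $r$ horizontal lines and $c$ vertical lines meeting in $rc$ vertices. Each horizontal line consists of $c+1$ edges (the outermost ones are a left and a right boundary edge) and each vertical line of $r+1$ edges (the outermost ones are a top and a bottom boundary edge). A state assigns an orientation to every edge, agreeing with prescribed orientations on the boundary edges, such that at every vertex exactly two of the four adjacent edges point into the vertex and two point out. $L(m,j)$ is the number of states on the grid with $n$ rows and $m+1$ columns, rows numbered $1, \ldots, n$ from top to bottom, with boundary conditions: the top boundary arrow of the leftmost column points up and all other top boundary arrows point down; all bottom boundary arrows point down; all left boundary arrows point right; the right boundary arrow in row $j$ points left and all other right boundary arrows point right. *)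

From mathcomp Require Import all_boot.
Set Implicit Arguments. Unset Strict Implicit. Unset Printing Implicit Defensive.

(* Six-vertex model on the grid with n rows and c = m+1 columns.
   Rows are indexed by i : 'I_n (row i is row number i+1, counted from the top),
   columns by k : 'I_(m.+1) (from the left).
   Horizontal edges: in row i, edge k : 'I_(m.+2) lies between column k-1 and
   column k; edge 0 is the left boundary edge, edge m+1 the right boundary edge.
   Its orientation h (i,k) is true iff the arrow points RIGHT.
   Vertical edges: in column k, edge i : 'I_(n.+1) lies between row i-1 and
   row i; edge 0 is the top boundary edge, edge n the bottom boundary edge.
   Its orientation v (k,i) is true iff the arrow points DOWN. *)

Definition hor_or (n m : nat) := {ffun 'I_n * 'I_(m.+2) -> bool}.
Definition ver_or (n m : nat) := {ffun 'I_(m.+1) * 'I_(n.+1) -> bool}.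

(* number of the four edges at vertex (i,k) that point INTO the vertex *)
Definition in_count (n m : nat) (h : hor_or n m) (v : ver_or n m)
    (i : 'I_n) (k : 'I_(m.+1)) : nat :=
  h (i, inord k) + ~~ h (i, inord k.+1) + v (k, inord i) + ~~ v (k, inord i.+1).

(* boundary conditions defining L(m,j), with j the (1-based) row whose right
   boundary arrow points left *)
Definition is_state (n m j : nat) (s : hor_or n m * ver_or n m) : bool :=
  let (h, v) := s in
  [&& [forall i : 'I_n, h (i, ord0) == true],
      [forall i : 'I_n, h (i, ord_max) == (i.+1 != j)],       (* right: left only in row j *)
      [forall k : 'I_(m.+1), v (k, ord0) == (k != 0 :> nat)], (* top: up only in column 1 *)
      [forall k : 'I_(m.+1), v (k, ord_max) == true]
    & [forall i : 'I_n, forall k : 'I_(m.+1), in_count h v i k == 2]].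

Definition L (n m j : nat) : nat := #|[pred s : hor_or n m * ver_or n m | is_state j s]|.

From mathcomp Require Import all_boot zify.
Set Implicit Arguments. Unset Strict Implicit. Unset Printing Implicit Defensive.

(* Call level e the line of vertical edges with index e (level 0 is the top
   boundary). Summing the ice rule along row i gives the conservation law
     right_arrow i K + #(up arrows of level i in columns < K)
       = 1 + #(up arrows of level i+1 in columns < K).
   Level 0 has a single up arrow and the right boundary edge of row j is the
   only one that lets it leave, so levels 0, ..., j-1 carry exactly one up arrow
   each and the deeper levels none. As horizontal arrows count 0 or 1, the
   columns 0 = c_0 <= c_1 <= ... <= c_(j-1) <= m of these up arrows increase
   weakly; they determine the state, and every such sequence arises. Hence the
   states correspond to the weakly increasing (j-1)-tuples in {0, ..., m}, and
   there are C(m+j-1, j-1) of them. *)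

Lemma count_take_le (T : Type) (a : pred T) K s : count a (take K s) <= count a s.
Proof. by rewrite -[in count a s](cat_take_drop K s) count_cat leq_addr. Qed.

Lemma count_take_find (T : Type) (a : pred T) s K :
  count a s = 1 -> count a (take K s) = (find a s < K).
Proof.
elim: s K => [|x s IHs] [|K] //=; case: (a x); rewrite /= ?add0n ?ltnS; last exact: IHs.
by rewrite add1n => -[s0]; apply/eqP; rewrite eqSS -leqn0 -s0 count_take_le.
Qed.

Lemma count_iotaS (a : pred nat) K : count a (iota 0 K.+1) = count a (iota 0 K) + a K.
Proof. by rewrite -addn1 iotaD count_cat /= addn0. Qed.

Lemma tuple_of_bounded_seq k m (s : seq nat) :
  size s = k -> all (fun c => c <= m) s -> exists t : k.-tuple 'I_m.+1, map val t = s.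
Proof.
move=> sz_s s_le; have sz : size (map inord s : seq 'I_m.+1) == k by rewrite size_map sz_s.
exists (Tuple sz); rewrite /= -map_comp -[RHS]map_id; apply/eq_in_map => c /(allP s_le) c_le.
by rewrite /= inordK.
Qed.

Lemma val_tuple_le k m (t : k.-tuple 'I_m.+1) : all (fun c => c <= m) (map val t).
Proof. by apply/allP => x /mapP[c _ ->]; rewrite -ltnS ltn_ord. Qed.

Lemma inord0 k : inord 0 = ord0 :> 'I_k.+1.
Proof. by apply: val_inj; rewrite /= inordK. Qed.

Lemma inord_max k : inord k = ord_max :> 'I_k.+1.
Proof. by apply: val_inj; rewrite /= inordK. Qed.

(* A sequence s places the up arrow of level e at column s`_e for e < size s;
   deeper levels have no up arrow. *)
Definition up_within (s : seq nat) (e K : nat) : bool := (e < size s) && (nth 0 s e < K).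

Definition up_at (s : seq nat) (e k : nat) : bool := (e < size s) && (k == nth 0 s e).

Section StateOf.
Variables n m : nat.

(* For sorted s, [up_within s i.+1 K] implies [up_within s i K], and the
   horizontal arrow is 1 - [up_within s i K] + [up_within s i.+1 K], the value
   forced by the conservation law. *)
Definition state_of (s : seq nat) : hor_or n m * ver_or n m :=
  ([ffun p : 'I_n * 'I_m.+2 => ~~ up_within s p.1 p.2 || up_within s p.1.+1 p.2],
   [ffun p : 'I_m.+1 * 'I_n.+1 => ~~ up_at s p.2 p.1]).

Lemma state_of_is_state s : size s < n -> all (fun c => c <= m) s -> sorted leq s ->
  is_state (size s).+1 (state_of (0 :: s)).
Proof.
move=> sz_s s_le s_sorted.
have le_m e : nth 0 (0 :: s) e <= m.
  by case: e => [|e] //=; case: (ltnP e (size s)) => [/(all_nthP 0 s_le)|/(nth_default 0) ->].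
have s_mono : forall e, e.+1 < size (0 :: s) -> nth 0 (0 :: s) e <= nth 0 (0 :: s) e.+1.
  by apply/(sortedP 0); rewrite /= path_min_sorted //; apply/allP.
apply/and5P; split; apply/forallP => i; rewrite ?ffunE /up_within /up_at //=.
- by rewrite ltn0 !andbF.
- by apply/eqP; have := le_m i; have /= := le_m i.+1; lia.
- by rewrite ltnNge sz_s.
apply/forallP => k; rewrite /in_count !ffunE /up_within /up_at /= !inordK;
  try by have := ltn_ord i; have := ltn_ord k; lia.
have := s_mono i; have := le_m i; have /= := le_m i.+1; lia.
Qed.

Lemma state_of_inj s1 s2 : size s1 = size s2 -> size s1 <= n.+1 ->
  all (fun c => c <= m) s1 -> state_of s1 = state_of s2 -> s1 = s2.
Proof.
move=> eq_sz sz_le s1_le /(congr1 snd) /= eq_v.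
apply: (eq_from_nth (x0 := 0) eq_sz) => e e_lt.
have e_n : e < n.+1 by apply: leq_trans sz_le.
have c_m : nth 0 s1 e < m.+1 by apply: (all_nthP 0 s1_le).
have := congr1 (fun f : ver_or n m => f (Ordinal c_m, Ordinal e_n)) eq_v.
by rewrite !ffunE /up_at /= -eq_sz e_lt eqxx /= => /esym/negbFE/eqP.
Qed.

End StateOf.

Section State.
Variables (n m j : nat) (h : hor_or n.+1 m) (v : ver_or n.+1 m).
Hypotheses (hv_state : is_state j (h, v)) (j_gt0 : 0 < j) (j_le : j <= n.+1).

Definition right_arrow (i K : nat) : bool := h (inord i, inord K).
Definition up_arrow (e k : nat) : bool := ~~ v (inord k, inord e).
Definition up_count (e K : nat) : nat := count (up_arrow e) (iota 0 K).
Definition up_pos (e : nat) : nat := find (up_arrow e) (iota 0 m.+1).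
Definition up_positions : seq nat := [seq up_pos e.+1 | e <- iota 0 j.-1].

Lemma right_arrow0 i : right_arrow i 0.
Proof.
case/and5P: hv_state => /forallP left_bd _ _ _ _.
by rewrite /right_arrow inord0 (eqP (left_bd _)).
Qed.

Lemma right_arrow_max i : i < n.+1 -> right_arrow i m.+1 = (i.+1 != j).
Proof.
case/and5P: hv_state => _ /forallP right_bd _ _ _ lt_i.
by rewrite /right_arrow inord_max (eqP (right_bd _)) inordK.
Qed.

Lemma up_arrow0 k : k < m.+1 -> up_arrow 0 k = (k == 0).
Proof.
case/and5P: hv_state => _ _ /forallP top_bd _ _ lt_k.
by rewrite /up_arrow inord0 (eqP (top_bd _)) inordK ?negbK.
Qed.

Lemma ice_rule i k : i < n.+1 -> k < m.+1 ->
  right_arrow i k + ~~ right_arrow i k.+1 + ~~ up_arrow i k + up_arrow i.+1 k = 2.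
Proof.
case/and5P: hv_state => _ _ _ _ /forallP ice lt_i lt_k.
have /forallP /(_ (inord k)) /eqP := ice (inord i).
by rewrite /in_count /right_arrow /up_arrow !negbK !inordK.
Qed.

Lemma up_countS e K : up_count e K.+1 = up_count e K + up_arrow e K.
Proof. exact: count_iotaS. Qed.

Lemma up_count_flux i K : i < n.+1 -> K <= m.+1 ->
  right_arrow i K + up_count i K = 1 + up_count i.+1 K.
Proof.
move=> lt_i; elim: K => [|K IHK] lt_K; first by rewrite right_arrow0.
have := ice_rule lt_i lt_K; have := IHK (ltnW lt_K); rewrite !up_countS; lia.
Qed.

Lemma up_count_top K : K <= m.+1 -> up_count 0 K = (0 < K).
Proof.
elim: K => [//|K IHK] lt_K.
by rewrite up_countS IHK ?(ltnW lt_K) // up_arrow0 //; case: K {IHK lt_K}.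
Qed.

Lemma up_count_full e : e <= n.+1 -> up_count e m.+1 = (e < j).
Proof.
elim: e => [_|e IHe lt_e]; first by rewrite up_count_top // j_gt0.
have := up_count_flux lt_e (leqnn _); rewrite right_arrow_max // IHe ?(ltnW lt_e) //; lia.
Qed.

Lemma up_countE e K : e <= n.+1 -> K <= m.+1 ->
  up_count e K = (e < j) && (up_pos e < K).
Proof.
move=> le_e le_K; have total := up_count_full le_e.
have take_K : iota 0 K = take K (iota 0 m.+1) by rewrite take_iota (minn_idPl le_K).
rewrite /up_count take_K; case: (ltnP e j) => [lt_ej|le_je] /=.
  by rewrite count_take_find // -/(up_count e m.+1) total lt_ej.
have := count_take_le (up_arrow e) K (iota 0 m.+1).
by rewrite -/(up_count e m.+1) total ltnNge le_je leqn0 => /eqP.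
Qed.

Lemma up_pos_lt e : e < j -> up_pos e < m.+1.
Proof.
move=> lt_ej; rewrite /up_pos -[X in _ < X](size_iota 0) -has_find has_count.
by rewrite -/(up_count e m.+1) up_count_full ?lt_ej // ltnW // (leq_trans lt_ej j_le).
Qed.

Lemma up_pos0 : up_pos 0 = 0.
Proof.
have := up_countE (leq0n n.+1) (ltn0Sn m).
by rewrite up_count_top // j_gt0; case: (up_pos 0).
Qed.

Lemma up_pos_mono e : e.+1 < j -> up_pos e <= up_pos e.+1.
Proof.
move=> lt_ej; have lt_pos := up_pos_lt lt_ej.
have le_e1 : e.+1 <= n.+1 := ltnW (leq_trans lt_ej j_le).
have := up_count_flux le_e1 lt_pos.
rewrite (up_countE (ltnW le_e1) lt_pos) (up_countE le_e1 lt_pos).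
by rewrite lt_ej ltnSn (ltnW lt_ej); case: (right_arrow _ _); case: ltnP.
Qed.

Lemma up_arrowE e k : e <= n.+1 -> k < m.+1 -> up_arrow e k = (e < j) && (k == up_pos e).
Proof.
move=> le_e lt_k; have := up_countS e k.
rewrite (up_countE le_e lt_k) (up_countE le_e (ltnW lt_k)).
case: (up_arrow e k); lia.
Qed.

Lemma right_arrowE i K : i < n.+1 -> K <= m.+1 ->
  right_arrow i K = ~~ ((i < j) && (up_pos i < K)) || ((i.+1 < j) && (up_pos i.+1 < K)).
Proof.
move=> lt_i le_K; have := up_count_flux lt_i le_K.
rewrite (up_countE (ltnW lt_i) le_K) (up_countE lt_i le_K).
case: (right_arrow i K); lia.
Qed.

Lemma nth_up_positions e : e < j -> nth 0 (0 :: up_positions) e = up_pos e.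
Proof.
case: e => [_|e lt_e] /=; first by rewrite up_pos0.
by rewrite (nth_map 0) ?size_iota ?nth_iota //; lia.
Qed.

Lemma size_up_positions : size up_positions = j.-1.
Proof. by rewrite size_map size_iota. Qed.

Lemma up_within_up_positions e K :
  up_within (0 :: up_positions) e K = (e < j) && (up_pos e < K).
Proof.
rewrite /up_within /= size_up_positions prednK //.
by case: ltnP => //= lt_e; rewrite nth_up_positions.
Qed.

Lemma up_at_up_positions e k : up_at (0 :: up_positions) e k = (e < j) && (k == up_pos e).
Proof.
rewrite /up_at /= size_up_positions prednK //.
by case: ltnP => //= lt_e; rewrite nth_up_positions.
Qed.

Lemma up_positions_le : all (fun c => c <= m) up_positions.
Proof.
apply/allP => c /mapP[e]; rewrite mem_iota => /andP[_ lt_e] ->.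
by rewrite -ltnS up_pos_lt //; lia.
Qed.

Lemma sorted_up_positions : sorted leq up_positions.
Proof.
apply/(sortedP 0) => e; rewrite size_up_positions => lt_e.
rewrite !(nth_map 0) ?size_iota ?nth_iota //; try lia.
by rewrite !add0n up_pos_mono //; lia.
Qed.

Lemma state_of_up_positions : state_of n.+1 m (0 :: up_positions) = (h, v).
Proof.
congr pair; apply/ffunP => -[a b]; rewrite ffunE /=.
  by rewrite !up_within_up_positions -right_arrowE ?leq_ord // /right_arrow !inord_val.
by rewrite up_at_up_positions -up_arrowE ?leq_ord // /up_arrow !inord_val negbK.
Qed.

End State.

Definition state_of_tuple n m j (t : j.-1.-tuple 'I_m.+1) : hor_or n m * ver_or n m :=
  state_of n m (0 :: map val t).

Lemma state_of_tuple_inj n m j : j <= n.+1 -> injective (@state_of_tuple n m j).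
Proof.
move=> le_jn t1 t2 /state_of_inj eq_t; apply/val_inj/(inj_map val_inj).
suff [] : 0 :: map val t1 = 0 :: map val t2 by [].
by apply: eq_t; rewrite /= ?size_map ?size_tuple ?val_tuple_le //; lia.
Qed.

Lemma states_sorted_tuples n m j : 0 < j <= n.+1 ->
  [pred s : hor_or n.+1 m * ver_or n.+1 m | is_state j s] =i
  @state_of_tuple n.+1 m j @: [set t : j.-1.-tuple 'I_m.+1 | sorted leq (map val t)].
Proof.
case/andP=> j_gt0 le_jn [h v]; rewrite inE; apply/idP/imsetP => [hv | [t]].
  have [t val_t] :=
    tuple_of_bounded_seq (size_up_positions j v) (up_positions_le hv j_gt0 le_jn).
  exists t; first by rewrite inE val_t (sorted_up_positions hv j_gt0 le_jn).
  by rewrite /state_of_tuple val_t (state_of_up_positions hv j_gt0 le_jn).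
rewrite inE => t_sorted ->; have := @state_of_is_state n.+1 m (map val t).
by rewrite size_map size_tuple prednK //; apply; rewrite ?val_tuple_le //; lia.
Qed.

Theorem lemma2 (n m j : nat) : 1 <= n -> 1 <= j <= n -> L n m j = 'C(m + j - 1, m).
Proof.
case: n => [//|n] _ j_range; have /andP[_ le_jn] := j_range.
rewrite /L (eq_card (@states_sorted_tuples n m j j_range)).
rewrite (card_imset _ (@state_of_tuple_inj n.+1 m j (leqW le_jn))) card_sorted_tuples.
by rewrite -[RHS]bin_sub; [congr 'C(_, _)|]; lia.
Qed.
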